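(* Let $f\in\mathcal S_{\mathbf M}$ and $n\in\mathbb N$, and let $\|\cdot\|$ denote either the Luxemburg norm $\|\cdot\|_{\mathbf M}$ or the Orlicz norm $\|\cdot\|^*_{\mathbf M}$. Then $$E_n(f):=\inf_{t_{n-1}\in\mathcal T_{n-1}}\|f-t_{n-1}\|=\|f-S_{n-1}(f)\|,$$ where $S_{n-1}(f)(x)=\sum_{|k|\le n-1}\widehat f(k)e^{\mathrm{i}kx}$ is the Fourier sum of $f$.
   Context: $L$ is the space of $2\pi$-periodic Lebesgue integrable functions, with Fourier coefficients $\widehat f(k)=(2\pi)^{-1}\int_0^{2\pi}f(x)e^{-\mathrm{i}kx}\,dx$, $k\in\mathbb Z$. Let $\mathbf M=\{M_k\}_{k\in\mathbb Z}$ be a sequence of Orlicz functions on $[0,\infty)$ (each $M_k$ nondecreasing and convex, $M_k(0)=0$, $M_k(u)\to\infty$ as $u\to\infty$). $\mathcal S_{\mathbf M}$ is the space of all $f\in L$ whose Luxemburg norm $\|f\|_{\mathbf M}=\inf\{a>0:\sum_{k\in\mathbb Z}M_k(|\widehat f(k)|/a)\le 1\}$ is finite (functions $f,g$ with $\|f-g\|_{\mathbf M}=0$ are identified). With $\tilde M_k(v)=\sup\{uv-M_k(u):u\ge0\}$, let $\Lambda$ be the set of sequences $\lambda=\{\lambda_k\}_{k\in\mathbb Z}$ of positive numbers with $\sum_k\tilde M_k(\lambda_k)\le1$; the Orlicz norm is $\|f\|^*_{\mathbf M}=\sup\{\sum_{k\in\mathbb Z}\lambda_k|\widehat f(k)|:\lambda\in\Lambda\}$.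 $\mathcal T_{m}$ denotes the set of trigonometric polynomials $\sum_{|k|\le m}c_ke^{\mathrm{i}kx}$ with arbitrary complex $c_k$. *)

From mathcomp Require Import all_boot all_order all_algebra.
From mathcomp Require Import all_classical all_reals all_analysis.
From mathcomp Require Import complex.
Import Order.TTheory GRing.Theory Num.Theory.

Set Implicit Arguments.
Unset Strict Implicit.
Unset Printing Implicit Defensive.

Local Open Scope classical_set_scope.
Local Open Scope ring_scope.

Section OrliczSeq.
Variable R : realType.

Definition cmod (z : R[i]) : R := Num.sqrt (complex.Re z ^+ 2 + complex.Im z ^+ 2).

Definition expi (t : R) : R[i] := Complex (cos t) (sin t).

Definition inL (f : R -> R[i]) : Prop :=
  (forall x, f (x + 2 * pi) = f x) /\
  (@lebesgue_measure R).-integrable `[0, 2 * pi] (EFin \o (fun x => complex.Re (f x))) /\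
  (@lebesgue_measure R).-integrable `[0, 2 * pi] (EFin \o (fun x => complex.Im (f x))).

Definition fourier (f : R -> R[i]) (k : int) : R[i] :=
  Complex
    ((2 * pi)^-1 * Rintegral (@lebesgue_measure R) `[0, 2 * pi]
        (fun x => complex.Re (f x * expi (- (k%:~R * x)))))
    ((2 * pi)^-1 * Rintegral (@lebesgue_measure R) `[0, 2 * pi]
        (fun x => complex.Im (f x * expi (- (k%:~R * x))))).

(* trigonometric polynomial sum_{|k| <= m} c_k e^{ikx} *)
Definition trigpoly (m : nat) (c : int -> R[i]) (x : R) : R[i] :=
  \sum_(i < (2 * m).+1) c (i%:Z - m%:Z) * expi ((i%:Z - m%:Z)%:~R * x).

Definition Tpoly (m : nat) : set (R -> R[i]) :=
  [set t | exists c : int -> R[i], t = trigpoly m c].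

Definition fsum (m : nat) (f : R -> R[i]) : R -> R[i] := trigpoly m (fourier f).

Definition orlicz_fun (M : R -> R) : Prop :=
  [/\ M 0 = 0,
      (forall u v, 0 <= u -> u <= v -> M u <= M v),
      (forall u v t, 0 <= u -> 0 <= v -> 0 <= t -> t <= 1 ->
          M (t * u + (1 - t) * v) <= t * M u + (1 - t) * M v)
    & M x @[x --> +oo] --> +oo].

(* Luxemburg norm (extended-real valued; +oo iff f is not in S_M) *)
Definition lux_norm (M : int -> R -> R) (f : R -> R[i]) : \bar R :=
  ereal_inf [set a%:E | a in
    [set a : R | 0 < a /\
       (\esum_(k in [set: int]) (M k (cmod (fourier f k) / a))%:E <= 1)%E]].

Definition compl_fun (M : R -> R) (v : R) : \bar R :=
  ereal_sup [set (u * v - M u)%:E | u in [set u : R | 0 <= u]].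

Definition Lambda (M : int -> R -> R) : set (int -> R) :=
  [set lam | (forall k, 0 < lam k) /\
     (\esum_(k in [set: int]) compl_fun (M k) (lam k) <= 1)%E].

Definition orl_norm (M : int -> R -> R) (f : R -> R[i]) : \bar R :=
  ereal_sup [set (\esum_(k in [set: int]) (lam k * cmod (fourier f k))%:E)%E
            | lam in Lambda M].

End OrliczSeq.

From mathcomp Require Import all_boot all_order all_algebra.
From mathcomp Require Import all_classical all_reals all_analysis.
From mathcomp Require Import complex.
From mathcomp Require Import zify measurable_realfun.
Import Order.TTheory GRing.Theory Num.Theory.
Import numFieldNormedType.Exports.
Local Open Scope classical_set_scope.
Local Open Scope ring_scope.

(* For t in T_(n-1), f - t has the same Fourier coefficients as f for |k| >= n,
   while f - S_(n-1) f has these coefficients for |k| >= n and zero ones for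
   |k| < n.  Hence |(f - S_(n-1) f)^(k)| <= |(f - t)^(k)| for every k; both
   norms are nondecreasing in each |g^(k)|, so the infimum is attained at
   t = S_(n-1) f.  The analytic input is the orthogonality of the e^(ikx) on
   [0, 2 pi], obtained from the fundamental theorem of calculus. *)

Lemma periodicz {U V : zmodType} {f : U -> V} {T : U} :
  periodic f T -> forall (p : int) a, f (a + T *~ p) = f a.
Proof.
move=> fT [] n a; first exact: periodicn.
by rewrite NegzE mulrNz -(periodicn fT n.+1) subrK.
Qed.

Section trigonometric_integrals.
Context {R : realType}.
Notation mu := (@lebesgue_measure R).

Lemma sin_intr_mul2pi (p : int) : sin (p%:~R * (2 * pi)) = 0 :> R.
Proof. by rewrite mulrzl mulr_natl -[_ *~ p]add0r (periodicz (@sinD2pi R)) sin0. Qed.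

Lemma cos_intr_mul2pi (p : int) : cos (p%:~R * (2 * pi)) = 1 :> R.
Proof. by rewrite mulrzl mulr_natl -[_ *~ p]add0r (periodicz (@cosD2pi R)) cos0. Qed.

Lemma is_derive_mulr (a x : R) : is_derive x 1 ( *%R a) a.
Proof. by apply: is_derive_eq; exact: mulr1. Qed.

Lemma is_derive_sinM (a x : R) :
  is_derive x 1 (fun y => sin (a * y)) (cos (a * x) * a).
Proof. exact: (is_derive1_comp (is_derive_sin _) (is_derive_mulr a x)). Qed.

Lemma is_derive_cosM (a x : R) :
  is_derive x 1 (fun y => cos (a * y)) (- sin (a * x) * a).
Proof. exact: (is_derive1_comp (is_derive_cos _) (is_derive_mulr a x)). Qed.

Lemma Rintegral_itv_derive {f F : R -> R} {a b : R} : a < b -> continuous f ->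
  (forall x : R, is_derive x 1 F (f x)) -> Rintegral mu `[a, b] f = F b - F a.
Proof.
move=> ab cf F'f.
have cF (x : R) : {for x, continuous F}.
  have [dF _] := F'f x.
  exact/differentiable_continuous/derivable1_diffP.
rewrite /Rintegral (@continuous_FTC2 _ _ F) //.
- exact/continuous_subspaceT.
- split=> [x _||]; first by case: (F'f x).
  + exact/cvg_at_right_filter/cF.
  + exact/cvg_at_left_filter/cF.
- by move=> x _; rewrite derive1E derive_val.
Qed.

Lemma pi2_gt0 : 0 < 2 * pi :> R.
Proof. by rewrite mulr_gt0 ?pi_gt0. Qed.

Lemma continuous_cosM (a : R) : continuous (fun x => cos (a * x)).
Proof.
by move=> x; apply: continuous_comp; [exact: mulrl_continuous | exact: continuous_cos].
Qed.

Lemma continuous_sinM (a : R) : continuous (fun x => sin (a * x)).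
Proof.
by move=> x; apply: continuous_comp; [exact: mulrl_continuous | exact: continuous_sin].
Qed.

Lemma Rintegral_cos_intrM (p : int) :
  Rintegral mu `[0, 2 * pi] (fun x => cos (p%:~R * x)) = if p == 0 then 2 * pi else 0.
Proof.
have [->|p0] := eqVneq p 0.
  under eq_Rintegral do rewrite mul0r cos0.
  rewrite Rintegral_cst // mul1r /= lebesgue_measure_itv /= lte_fin pi2_gt0 /=.
  by rewrite subr0.
have pR0 : p%:~R != 0 :> R by rewrite intr_eq0.
have sin_primitive (x : R) :
    is_derive x 1 (fun y => p%:~R^-1 * sin (p%:~R * y)) (cos (p%:~R * x)).
  apply: is_derive_eq (is_deriveZ _ (is_derive_sinM _ x)) _.
  by rewrite [_ *: _]mulrCA mulVf ?mulr1.
rewrite (Rintegral_itv_derive pi2_gt0 (continuous_cosM _) sin_primitive).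
by rewrite sin_intr_mul2pi !(mulr0, sin0) subrr.
Qed.

Lemma Rintegral_sin_intrM (p : int) :
  Rintegral mu `[0, 2 * pi] (fun x => sin (p%:~R * x)) = 0.
Proof.
have [->|p0] := eqVneq p 0.
  under eq_Rintegral do rewrite mul0r sin0.
  by rewrite Rintegral_cst // mul0r.
have pR0 : p%:~R != 0 :> R by rewrite intr_eq0.
have cos_primitive (x : R) :
    is_derive x 1 (fun y => - p%:~R^-1 * cos (p%:~R * y)) (sin (p%:~R * x)).
  apply: is_derive_eq (is_deriveZ _ (is_derive_cosM _ x)) _.
  by rewrite [_ *: _]mulrCA !mulNr mulVf // mulrN opprK mulr1.
rewrite (Rintegral_itv_derive pi2_gt0 (continuous_sinM _) cos_primitive).
by rewrite cos_intr_mul2pi mulr0 cos0 subrr.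
Qed.

End trigonometric_integrals.

Section complex_integral.
Context {R : realType}.
Notation mu := (@lebesgue_measure R).
Local Notation Re := complex.Re.
Local Notation Im := complex.Im.

Let ReD (x y : R[i]) : Re (x + y) = Re x + Re y. Proof. by case: x; case: y. Qed.
Let ImD (x y : R[i]) : Im (x + y) = Im x + Im y. Proof. by case: x; case: y. Qed.
Let ReB (x y : R[i]) : Re (x - y) = Re x - Re y. Proof. by case: x; case: y. Qed.
Let ImB (x y : R[i]) : Im (x - y) = Im x - Im y. Proof. by case: x; case: y. Qed.

Lemma Re_mul_expi (z : R[i]) (t : R) : Re (z * expi t) = Re z * cos t - Im z * sin t.
Proof. by case: z. Qed.

Lemma Im_mul_expi (z : R[i]) (t : R) : Im (z * expi t) = Re z * sin t + Im z * cos t.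
Proof. by case: z => a b /=; rewrite addrC. Qed.

Definition cintegrable (a b : R) (g : R -> R[i]) : Prop :=
  mu.-integrable `[a, b] (EFin \o (fun x => Re (g x))) /\
  mu.-integrable `[a, b] (EFin \o (fun x => Im (g x))).

Definition cintegral (a b : R) (g : R -> R[i]) : R[i] :=
  Complex (Rintegral mu `[a, b] (fun x => Re (g x)))
          (Rintegral mu `[a, b] (fun x => Im (g x))).

Context {a b : R}.
Local Notation D := `[a, b]%classic.
Let cptD : compact D := @segment_compact _ a b.
(* measurability for the sigma-algebra carrying [lebesgue_measure], not the
   default one on [R] *)
Let mD : measurable (D : set (measurableTypeR R)) := measurable_itv `[a, b].

Lemma integrable_continuous {h : R -> R} :
  continuous h -> mu.-integrable D (EFin \o h).
Proof.
by move=> ch; apply: continuous_compact_integrable cptD _; exact: continuous_subspaceT.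
Qed.

Lemma integrableM_continuous {u h : R -> R} : mu.-integrable D (EFin \o u) ->
  continuous h -> mu.-integrable D (EFin \o (fun x => u x * h x)).
Proof.
move=> iu ch.
have bh : [bounded h x | x in D].
  have /compact_bounded[M [_ hM]] := continuous_compact (continuous_subspaceT ch) cptD.
  by exists M; split; rewrite ?num_real // => r Mr x Dx; apply: hM.
apply: (eq_integrable mD _ _ _
  (integrableMl mD iu (measurable_funTS (continuous_measurable_fun ch)) bh)).
by move=> x _; rewrite /= EFinM.
Qed.

Lemma cintegrable_cst (c : R[i]) : cintegrable a b (fun=> c).
Proof. by split; apply: integrable_continuous; exact: cst_continuous. Qed.

Lemma cintegrableD (g h : R -> R[i]) : cintegrable a b g -> cintegrable a b h ->
  cintegrable a b (fun x => g x + h x).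
Proof.
move=> [gRe gIm] [hRe hIm]; split.
- by apply: (eq_integrable mD _ _ _ (integrableD mD gRe hRe)) => x _; rewrite /= ReD.
- by apply: (eq_integrable mD _ _ _ (integrableD mD gIm hIm)) => x _; rewrite /= ImD.
Qed.

Lemma cintegrable_mul_expi (g : R -> R[i]) (w : R) : cintegrable a b g ->
  cintegrable a b (fun x => g x * expi (w * x)).
Proof.
move=> [gRe gIm]; split.
- apply: (eq_integrable mD _ _ _ (integrableB mD
    (integrableM_continuous gRe (continuous_cosM w))
    (integrableM_continuous gIm (continuous_sinM w)))) => x _.
  by rewrite /= Re_mul_expi.
- apply: (eq_integrable mD _ _ _ (integrableD mD
    (integrableM_continuous gRe (continuous_sinM w))
    (integrableM_continuous gIm (continuous_cosM w)))) => x _.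
  by rewrite /= Im_mul_expi.
Qed.

Lemma cintegral0 : cintegral a b (fun=> 0) = 0.
Proof. by rewrite /cintegral Rintegral_cst // mul0r. Qed.

Lemma cintegralD (g h : R -> R[i]) : cintegrable a b g -> cintegrable a b h ->
  cintegral a b (fun x => g x + h x) = cintegral a b g + cintegral a b h.
Proof.
move=> [gRe gIm] [hRe hIm]; rewrite /cintegral.
rewrite -[RHS]/(Complex (_ + _) (_ + _)) -!RintegralD //.
by congr Complex; apply: eq_Rintegral => x _; rewrite ?ReD ?ImD.
Qed.

Lemma cintegralB (g h : R -> R[i]) : cintegrable a b g -> cintegrable a b h ->
  cintegral a b (fun x => g x - h x) = cintegral a b g - cintegral a b h.
Proof.
move=> [gRe gIm] [hRe hIm]; rewrite /cintegral.
rewrite -[RHS]/(Complex (_ - _) (_ - _)) -!RintegralB //.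
by congr Complex; apply: eq_Rintegral => x _; rewrite ?ReB ?ImB.
Qed.

Lemma cintegrable_sum (I : Type) (s : seq I) (F : I -> R -> R[i]) :
  (forall i, cintegrable a b (F i)) -> cintegrable a b (fun x => \sum_(i <- s) F i x).
Proof.
move=> iF; elim: s => [|i s IHs].
  by under eq_fun do rewrite big_nil; exact: cintegrable_cst.
by under eq_fun do rewrite big_cons; exact: cintegrableD.
Qed.

Lemma cintegral_sum (I : Type) (s : seq I) (F : I -> R -> R[i]) :
  (forall i, cintegrable a b (F i)) ->
  cintegral a b (fun x => \sum_(i <- s) F i x) = \sum_(i <- s) cintegral a b (F i).
Proof.
move=> iF; elim: s => [|i s IHs].
  by under eq_fun do rewrite big_nil; rewrite big_nil cintegral0.
under eq_fun do rewrite big_cons.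
by rewrite big_cons cintegralD ?IHs //; exact: cintegrable_sum.
Qed.

End complex_integral.

Lemma sum_centered_pick (V : zmodType) (m : nat) (k : int) (F : int -> V) :
  \sum_(i < (2 * m).+1) (if i%:Z - m%:Z == k then F (i%:Z - m%:Z) else 0) =
  if - (m%:Z) <= k <= m%:Z then F k else 0.
Proof.
case: ifP => km; last first.
  by rewrite big1 // => i _; case: eqP => // ik; move: km (ltn_ord i); lia.
have ik : (absz (k + m%:Z)%R < (2 * m).+1)%N by lia.
rewrite (bigD1 (Ordinal ik)) //= big1 ?addr0 => [|i ni]; last first.
  by case: eqP => // ik'; case/eqP: ni; apply: val_inj => /=; lia.
have -> : (absz (k + m%:Z))%:Z - m%:Z = k by lia.
by rewrite eqxx.
Qed.

Lemma ereal_inf_image_min {R : realType} {T : Type} {A : set T}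
    (F : T -> \bar R) {t0 : T} :
  A t0 -> (forall t, A t -> (F t0 <= F t)%E) -> ereal_inf (F @` A) = F t0.
Proof.
move=> At0 Fmin; apply/eqP; rewrite eq_le ereal_inf_lbound ?andbT; last by exists t0.
by apply: le_ereal_inf_tmp => _ [t At <-]; exact: Fmin.
Qed.

Section fourier_coefficients.
Context {R : realType}.
Notation mu := (@lebesgue_measure R).
Local Notation cintegrable := (cintegrable 0 (2 * pi)).
Local Notation cintegral := (cintegral 0 (2 * pi)).

Lemma expiD (s t : R) : expi s * expi t = expi (s + t).
Proof. by apply/eqP; rewrite eq_complex /= cosD sinD (addrC (sin s * _)) !eqxx. Qed.

Lemma cintegral_cexpi (c : R[i]) (p : int) :
  cintegral (fun x => c * expi (p%:~R * x)) = if p == 0 then (2 * pi)%:C%C * c else 0.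
Proof.
have icos : mu.-integrable `[0, 2 * pi] (EFin \o (fun x => cos (p%:~R * x))).
  exact: integrable_continuous (continuous_cosM _).
have isin : mu.-integrable `[0, 2 * pi] (EFin \o (fun x => sin (p%:~R * x))).
  exact: integrable_continuous (continuous_sinM _).
have iZ (r : R) (h : R -> R) : continuous h ->
    mu.-integrable `[0, 2 * pi] (EFin \o (fun x => r * h x)).
  exact/integrableM_continuous/integrable_continuous/cst_continuous.
rewrite /cintegral.
under eq_Rintegral do rewrite Re_mul_expi.
under [X in Complex _ X]eq_Rintegral do rewrite Im_mul_expi.
rewrite RintegralB ?RintegralD ?RintegralZl //;
  try exact: iZ (continuous_cosM _); try exact: iZ (continuous_sinM _).
rewrite Rintegral_cos_intrM Rintegral_sin_intrM.
case: ifP => _; case: c => x y; apply/eqP; rewrite eq_complex /=.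
  by rewrite !(mulr0, mul0r, subr0, addr0, add0r) !(mulrC (2 * pi)) !eqxx.
by rewrite !mulr0 subrr addr0 eqxx.
Qed.

Lemma fourierE (g : R -> R[i]) (k : int) :
  fourier g k = ((2 * pi)^-1)%:C%C * cintegral (fun x => g x * expi (- (k%:~R * x))).
Proof. by apply/eqP; rewrite eq_complex /= !mul0r subr0 addr0 !eqxx. Qed.

Lemma fourierB (g h : R -> R[i]) (k : int) : cintegrable g -> cintegrable h ->
  fourier (fun x => g x - h x) k = fourier g k - fourier h k.
Proof.
have iexpi u : cintegrable u -> cintegrable (fun x => u x * expi (- (k%:~R * x))).
  by move=> iu; under eq_fun do rewrite -mulNr; exact: cintegrable_mul_expi.
move=> ig ih; rewrite !fourierE -mulrBr -cintegralB; [|exact: iexpi..].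
by under eq_fun do rewrite mulrBl.
Qed.

Lemma cintegrable_trigpoly (m : nat) (c : int -> R[i]) : cintegrable (trigpoly m c).
Proof. by apply: cintegrable_sum => i; exact/cintegrable_mul_expi/cintegrable_cst. Qed.

Lemma fourier_trigpoly (m : nat) (c : int -> R[i]) (k : int) :
  fourier (trigpoly m c) k = if - (m%:Z) <= k <= m%:Z then c k else 0.
Proof.
rewrite fourierE.
under eq_fun => x do rewrite /trigpoly mulr_suml.
under eq_fun => x do under eq_bigr => i _ do
  rewrite -mulrA expiD -mulrBl -rmorphB.
rewrite cintegral_sum => [|i]; last exact/cintegrable_mul_expi/cintegrable_cst.
under eq_bigr => i _ do rewrite cintegral_cexpi subr_eq0.
rewrite (sum_centered_pick _ _ _ (fun j => (2 * pi)%:C%C * c j)).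
case: ifP => _; last by rewrite mulr0.
by rewrite mulrA -rmorphM mulVf ?mul1r // gt_eqF ?pi2_gt0.
Qed.

Lemma cmod0 : cmod (0 : R[i]) = 0.
Proof. by rewrite /cmod /= expr0n /= addr0 sqrtr0. Qed.

Lemma cmod_ge0 (z : R[i]) : 0 <= cmod z.
Proof. exact: sqrtr_ge0. Qed.

Lemma fourier_sub_fsum_le (f t : R -> R[i]) (m : nat) (k : int) :
  cintegrable f -> Tpoly m t ->
  cmod (fourier (fun x => f x - fsum m f x) k) <= cmod (fourier (fun x => f x - t x) k).
Proof.
move=> fi [c ->].
rewrite /fsum !fourierB ?fourier_trigpoly //; try exact: cintegrable_trigpoly.
by case: ifP => _; rewrite ?subrr ?cmod0 ?cmod_ge0.
Qed.

Lemma lux_norm_le (M : int -> R -> R) (g h : R -> R[i]) :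
  (forall k u v, 0 <= u -> u <= v -> M k u <= M k v) ->
  (forall k, cmod (fourier g k) <= cmod (fourier h k)) ->
  (lux_norm M g <= lux_norm M h)%E.
Proof.
move=> Mmono gh; apply: le_ereal_inf_tmp => _ [a [a0 ha] <-].
apply: ereal_inf_lbound; exists a => //; split => //.
apply: le_trans ha; apply: le_esum => k _; rewrite lee_fin.
by apply: Mmono; [rewrite divr_ge0 ?cmod_ge0 ?ltW | rewrite ler_pM2r ?invr_gt0].
Qed.

Lemma orl_norm_le (M : int -> R -> R) (g h : R -> R[i]) :
  (forall k, cmod (fourier g k) <= cmod (fourier h k)) ->
  (orl_norm M g <= orl_norm M h)%E.
Proof.
move=> gh; rewrite /orl_norm; apply: ge_ereal_sup => _ [lam lamL <-].
apply: le_ereal_sup_tmp.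
exists (\esum_(k in [set: int]) (lam k * cmod (fourier h k))%:E)%E; first by exists lam.
apply: le_esum => k _; rewrite lee_fin ler_wpM2l // ltW //.
by case: lamL => + _; apply.
Qed.

End fourier_coefficients.

Theorem lemma2 (R : realType) (M : int -> R -> R)
  (HM : forall k, orlicz_fun (M k))
  (f : R -> R[i]) (hfL : inL f) (hfS : (lux_norm M f < +oo)%E)
  (n : nat) (hn : (0 < n)%N) :
  ereal_inf [set lux_norm M (fun x => f x - t x) | t in @Tpoly R n.-1]
    = lux_norm M (fun x => f x - fsum n.-1 f x)
  /\
  ereal_inf [set orl_norm M (fun x => f x - t x) | t in @Tpoly R n.-1]
    = orl_norm M (fun x => f x - fsum n.-1 f x).
Proof.
have fi : cintegrable 0 (2 * pi) f := hfL.2.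
have Sf : Tpoly n.-1 (fsum n.-1 f) by exists (fourier f).
have Mmono k u v : 0 <= u -> u <= v -> M k u <= M k v.
  by case: (HM k) => _ + _ _; apply.
split.
- apply: (ereal_inf_image_min (fun t => lux_norm M (fun x => f x - t x)) Sf) => t Tt.
  by apply: lux_norm_le => // k; exact: fourier_sub_fsum_le.
- apply: (ereal_inf_image_min (fun t => orl_norm M (fun x => f x - t x)) Sf) => t Tt.
  by apply: orl_norm_le => k; exact: fourier_sub_fsum_le.
Qed.
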